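(* Let $n$ be a non-negative integer and let $r,s\in\mathbb{C}\setminus\mathbb{Z}$ with $s\neq0$ and $r-s\notin\mathbb{Z}$. Then \[ \begin{aligned} \sum_{k=0}^{n}(-1)^{k}\binom{n}{k}\frac{H_s-H_{k+r-s}}{\binom{k+r}{s}}H_k &=H_n\left(\frac{r+1}{(r-s+1)^2}\frac{1}{\binom{n+r}{r-s+1}}+\frac{s}{r-s+1}\frac{H_{n+s-1}-H_{r-s+1}}{\binom{n+r}{r-s+1}}\right)+H_n\frac{H_{r-s}-H_s}{\binom{r}{s}}\\ &\quad+\sum_{k=0}^{n-1}H_{n-1-k}\frac{s(k+s)(H_{k+s}-H_{r-s+1})+k}{(k+s)^2\binom{r+k+1}{r-s+1}}. \end{aligned} \]
   Context: For complex $z$ not a negative integer, $H_z=\psi(z+1)+\gamma$ ($\psi$ the digamma function, $\gamma$ Euler's constant); for integers $n\ge 0$, $H_n=\sum_{j=1}^n 1/j$. Binomial coefficients with complex entries: $\binom{x}{y}=\frac{\Gamma(x+1)}{\Gamma(y+1)\Gamma(x-y+1)}$. *)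

From Stdlib Require Import Reals Factorial ClassicalEpsilon.
From Coquelicot Require Import Coquelicot.

Open Scope C_scope.

Fixpoint csum (f : nat -> C) (n : nat) : C :=
  match n with
  | O => 0
  | S m => csum f m + f m
  end.

Definition clim_to (u : nat -> C) (l : C) : Prop :=
  filterlim u eventually (locally l).

(* The limit of a complex sequence (arbitrary value if it does not converge). *)
Definition clim (u : nat -> C) : C :=
  epsilon (inhabits (RtoC 0)) (fun l => clim_to u l).

(* Power x^z for real x > 0 and complex z: exp(z ln x). *)
Definition cpow_pos (x : R) (z : C) : C :=
  (exp (Re z * ln x) * cos (Im z * ln x), exp (Re z * ln x) * sin (Im z * ln x))%R.

Fixpoint rising (z : C) (m : nat) : C :=
  match m with
  | O => z
  | S p => rising z p * (z + RtoC (INR (S p)))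
  end.

(* Euler--Gauss definition of the Gamma function:
   Gamma z = lim_{m->oo} m! m^z / (z (z+1) ... (z+m)). *)
Definition Gamma (z : C) : C :=
  clim (fun m => RtoC (INR (Factorial.fact m)) * cpow_pos (INR m) z / rising z m).

Fixpoint Hnat (n : nat) : C :=
  match n with
  | O => 0
  | S m => Hnat m + / RtoC (INR (S m))
  end.

(* Harmonic numbers of complex argument:
   H_z = psi(z+1) + gamma = sum_{k>=1} (1/k - 1/(k+z)). *)
Definition Hc (z : C) : C :=
  clim (fun N => csum (fun k => / RtoC (INR (S k)) - / (RtoC (INR (S k)) + z)) N).

Definition cbinom (x y : C) : C :=
  Gamma (x + 1) / (Gamma (y + 1) * Gamma (x - y + 1)).

Definition not_int (z : C) : Prop := forall m : Z, z <> RtoC (IZR m).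

(* With x = r - s + 1 and y = r + 1, the functional equations Gamma(z+1) = z Gamma(z)
   and H_{z+1} = H_z + 1/(z+1) (proved from the limit definitions) give
   1/binom(k+r, s) = K (x)_k/(y)_k with K = s Gamma(s) Gamma(x)/Gamma(y), and
   H_{k+r-s} = H_{r-s} + sum_{j<k} 1/(x+j).  The left side is thus K times a sum
   sum_k (-1)^k binom(n,k) f(k) H_k.  Exchanging summations through
   sum_{j<n} binom(n-1-j, k)/(j+1) = binom(n,k) (H_n - H_k) reduces it to the binomial
   transforms of f, which the Chu--Vandermonde identity and its harmonic companion
   evaluate as (s)_m/(y)_m (H_s - H_{r-s} + sum_{j<m} 1/(s+j)); a summation by parts
   against the harmonic numbers then yields the right side. *)

From Stdlib Require Import Reals Factorial Lia Lra ClassicalEpsilon.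
From Coquelicot Require Import Coquelicot.
Open Scope C_scope.

Lemma clim_to_iff (u : nat -> C) (l : C) :
  clim_to u l <->
  (forall eps : R, (0 < eps)%R ->
     exists N, forall n, (N <= n)%nat -> (Cmod (u n - l) < eps)%R).
Proof.
  unfold clim_to; split.
  - intros H eps Heps.
    assert (Hf := @norm_factor_gt_0 C_AbsRing C_NormedModule).
    assert (Hp : (0 < eps / norm_factor (V:=C_NormedModule))%R).
    { apply Rdiv_lt_0_compat; lra. }
    destruct (proj1 (filterlim_locally u l) H (mkposreal _ Hp)) as [N HN].
    exists N; intros n Hn.
    specialize (HN n Hn).
    apply (@norm_compat2 C_AbsRing C_NormedModule) in HN. simpl in HN.
    change (Cmod (u n - l) < eps)%R with (norm (minus (u n) l) < eps)%R.
    replace eps with (norm_factor (V:=C_NormedModule) * (eps / norm_factor (V:=C_NormedModule)))%R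
      by (field; lra).
    exact HN.
  - intros H. apply (proj2 (filterlim_locally u l)).
    intros eps. destruct (H eps (cond_pos eps)) as [N HN].
    exists N; intros n Hn. apply (@norm_compat1 C_AbsRing C_NormedModule). exact (HN n Hn).
Qed.

Lemma clim_to_unique (u : nat -> C) (l : C) : clim_to u l -> clim u = l.
Proof.
  intros H. unfold clim.
  assert (H2 : clim_to u (epsilon (inhabits (RtoC 0)) (fun l => clim_to u l))).
  { apply epsilon_spec. exists l; exact H. }
  exact (filterlim_locally_unique u _ _ H2 H).
Qed.

Lemma clim_to_incr_n (u : nat -> C) (l : C) (M : nat) :
  clim_to (fun n => u (n + M)%nat) l -> clim_to u l.
Proof.
  intros H P HP. destruct (H P HP) as [N HN]. exists (N + M)%nat. intros n Hn.
  replace n with ((n - M) + M)%nat by lia. apply HN. lia.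
Qed.

Lemma clim_to_plus (u v : nat -> C) (a b : C) :
  clim_to u a -> clim_to v b -> clim_to (fun n => u n + v n) (a + b).
Proof.
  intros Hu Hv.
  exact (filterlim_comp_2 u v (@plus C_AbsRing) Hu Hv (@filterlim_plus C_AbsRing C_NormedModule a b)).
Qed.

Lemma clim_to_mult (u v : nat -> C) (a b : C) :
  clim_to u a -> clim_to v b -> clim_to (fun n => u n * v n) (a * b).
Proof.
  rewrite !clim_to_iff. intros Hu Hv eps He.
  pose proof (Cmod_ge_0 a) as Ha. pose proof (Cmod_ge_0 b) as Hb.
  set (e1 := Rmin 1 (eps / (2 * (Cmod b + 1)))).
  set (e2 := (eps / (2 * (Cmod a + 1)))%R).
  assert (He1 : (0 < e1)%R) by (apply Rmin_pos; [lra | apply Rdiv_lt_0_compat; lra]).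
  assert (He2 : (0 < e2)%R) by (apply Rdiv_lt_0_compat; lra).
  assert (He1_1 : (e1 <= 1)%R) by apply Rmin_l.
  assert (He1_eps : (e1 * (Cmod b + 1) <= eps / 2)%R).
  { apply (Rle_trans _ (eps / (2 * (Cmod b + 1)) * (Cmod b + 1))).
    - apply Rmult_le_compat_r; [lra | apply Rmin_r].
    - right. field. lra. }
  assert (He2_eps : ((Cmod a + 1) * e2 = eps / 2)%R) by (unfold e2; field; lra).
  destruct (Hu e1 He1) as [N1 H1]. destruct (Hv e2 He2) as [N2 H2].
  exists (max N1 N2). intros n Hn.
  specialize (H1 n ltac:(lia)). specialize (H2 n ltac:(lia)).
  assert (Hun : (Cmod (u n) <= Cmod a + 1)%R).
  { pose proof (Cmod_triangle (u n - a) a) as T.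
    replace (u n - a + a) with (u n) in T by ring. lra. }
  replace (u n * v n - a * b) with ((u n - a) * b + u n * (v n - b)) by ring.
  eapply Rle_lt_trans. apply Cmod_triangle. rewrite !Cmod_mult.
  assert ((Cmod (u n - a) * Cmod b <= e1 * (Cmod b + 1))%R)
    by (apply Rmult_le_compat; try apply Cmod_ge_0; lra).
  assert ((Cmod (u n) * Cmod (v n - b) < (Cmod a + 1) * e2)%R).
  { apply (Rle_lt_trans _ ((Cmod a + 1) * Cmod (v n - b))).
    - apply Rmult_le_compat_r; [apply Cmod_ge_0 | exact Hun].
    - apply Rmult_lt_compat_l; lra. }
  lra.
Qed.

Lemma Cmod_RtoC_add_ge (x : R) (z : C) : (0 <= x)%R -> (x - Cmod z <= Cmod (RtoC x + z))%R.
Proof.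
  intros Hx. pose proof (Cmod_triangle (RtoC x + z) (- z)) as T.
  replace (RtoC x + z + - z) with (RtoC x) in T by ring.
  rewrite Cmod_R, Cmod_opp, Rabs_right in T by lra. lra.
Qed.

Lemma clim_to_inv_nat_add (c : C) : clim_to (fun n => / (RtoC (INR n) + c)) 0.
Proof.
  rewrite clim_to_iff. intros eps He.
  destruct (INR_unbounded (Cmod c + / eps)) as [N HN].
  assert (Hinv : (0 < / eps)%R) by (apply Rinv_0_lt_compat; lra).
  exists N. intros n Hn.
  assert (HnN : (INR N <= INR n)%R) by (apply le_INR; lia).
  pose proof (Cmod_RtoC_add_ge (INR n) c (pos_INR n)) as Hlow.
  assert (Hnz : RtoC (INR n) + c <> 0) by (intro E; rewrite E, Cmod_0 in Hlow; lra).
  replace (/ (RtoC (INR n) + c) - 0) with (/ (RtoC (INR n) + c)) by ring.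
  rewrite Cmod_inv by exact Hnz.
  rewrite <- (Rinv_inv eps). apply Rinv_lt_contravar; [apply Rmult_lt_0_compat|]; lra.
Qed.

Lemma csum_sum_n (f : nat -> C) (n : nat) : csum f (S n) = sum_n f n.
Proof.
  induction n.
  - simpl. rewrite sum_O. change (0 + f O = f O). ring.
  - change (csum f (S n) + f (S n) = sum_n f (S n)). rewrite IHn.
    unfold sum_n. rewrite sum_n_Sm by lia. reflexivity.
Qed.

Lemma ex_series_inv_telescope (c : R) (M : nat) :
  ex_series (fun k => (c * (/ INR (k + S M) - / INR (S (k + S M))))%R).
Proof.
  exists (c * / INR (S M))%R.
  apply (filterlim_ext (fun n => (c * / INR (S M) - c * / INR (S (n + S M)))%R)).
  { intros n. induction n.
    - rewrite sum_O. simpl (0 + S M)%nat. ring.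
    - rewrite sum_Sn, <- IHn. simpl (S n + S M)%nat. change (plus ?a ?b) with (a + b)%R. ring. }
  change (is_lim_seq (fun n => (c * / INR (S M) - c * / INR (S (n + S M)))%R) (c * / INR (S M))%R).
  assert (H0 : is_lim_seq (fun n => / INR (S (n + S M)))%R 0%R).
  { assert (H := proj1 (is_lim_seq_incr_n INR (S (S M)) p_infty) is_lim_seq_INR).
    apply (is_lim_seq_ext (fun n => / INR (n + S (S M)))%R); [intros n; do 2 f_equal; lia|].
    exact (is_lim_seq_inv _ _ H ltac:(discriminate)). }
  pose proof (is_lim_seq_minus' _ _ _ _ (is_lim_seq_const (c * / INR (S M)))
                (is_lim_seq_scal_l _ c 0%R H0)) as Hlim.
  simpl in Hlim. rewrite Rmult_0_r, Rminus_0_r in Hlim. exact Hlim.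
Qed.

Lemma clim_to_of_increment_bound (u : nat -> C) (K : R) (M : nat) :
  (forall m, (S M <= m)%nat -> (Cmod (u (S m) - u m) <= K * (/ INR m - / INR (S m)))%R) ->
  exists l, clim_to u l.
Proof.
  intros Hb.
  set (d := fun k => u (S (k + S M)) - u (k + S M)%nat).
  assert (Hd : ex_series d).
  { apply (ex_series_le d (fun k => (K * (/ INR (k + S M) - / INR (S (k + S M))))%R)).
    - intros k. apply Hb. lia.
    - apply ex_series_inv_telescope. }
  destruct Hd as [l Hl]. exists (u (S M) + l).
  apply (clim_to_incr_n _ _ (S (S M))).
  apply (filterlim_ext (fun n => u (S M) + sum_n d n)).
  { assert (Hsum : forall n, csum d n = u (n + S M)%nat - u (S M)).
    { induction n; simpl csum; [simpl; ring|]. rewrite IHn. unfold d. simpl. ring. }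
    intros n. rewrite <- csum_sum_n, Hsum. replace (S n + S M)%nat with (n + S (S M))%nat by lia.
    ring. }
  apply clim_to_plus; [apply filterlim_const | exact Hl].
Qed.

Definition harmonic_term (z : C) (k : nat) : C :=
  / RtoC (INR (S k)) - / (RtoC (INR (S k)) + z).

Lemma harmonic_term_bound (x : R) (z : C) : (2 * Cmod z < x)%R -> (2 <= x)%R ->
  (Cmod (/ RtoC x - / (RtoC x + z)) <= 2 * Cmod z * (/ (x - 1) - / x))%R.
Proof.
  intros H1 H2.
  pose proof (Cmod_RtoC_add_ge x z ltac:(lra)) as Hd.
  pose proof (Cmod_ge_0 z) as Hz.
  assert (Hdnz : RtoC x + z <> 0) by (intro E; rewrite E, Cmod_0 in Hd; lra).
  assert (Hxnz : RtoC x <> 0) by (intro E; apply RtoC_inj in E; lra).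
  replace (/ RtoC x - / (RtoC x + z)) with (z * / (RtoC x * (RtoC x + z))) by (field; auto).
  rewrite Cmod_mult, Cmod_inv, Cmod_mult, Cmod_R, Rabs_right by (try lra; apply Cmult_neq_0; auto).
  assert (Ha : (/ (x * Cmod (RtoC x + z)) <= 2 * / (x * x))%R).
  { replace (2 * / (x * x))%R with (/ (x * (x / 2)))%R by (field; lra).
    apply Rinv_le_contravar; [apply Rmult_lt_0_compat | apply Rmult_le_compat_l]; lra. }
  assert (Hb : (/ (x * x) <= / (x - 1) - / x)%R).
  { replace (/ (x - 1) - / x)%R with (/ (x * (x - 1)))%R by (field; lra).
    apply Rinv_le_contravar; [apply Rmult_lt_0_compat | apply Rmult_le_compat_l]; lra. }
  replace (2 * Cmod z * (/ (x - 1) - / x))%R with (Cmod z * (2 * (/ (x - 1) - / x)))%R by ring.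
  apply Rmult_le_compat_l; lra.
Qed.

Lemma Hc_cvg (z : C) : clim_to (csum (harmonic_term z)) (Hc z).
Proof.
  assert (Hex : exists l, clim_to (csum (harmonic_term z)) l).
  { destruct (INR_unbounded (2 * Cmod z)) as [M HM].
    apply (clim_to_of_increment_bound _ (2 * Cmod z) M).
    intros m Hm. cbn [csum].
    replace (csum (harmonic_term z) m + harmonic_term z m - csum (harmonic_term z) m)
      with (harmonic_term z m) by ring.
    assert (HMm : (INR M + 1 <= INR m)%R) by (rewrite <- S_INR; apply le_INR; lia).
    pose proof (pos_INR M).
    replace (INR m) with (INR (S m) - 1)%R by (rewrite S_INR; ring).
    apply harmonic_term_bound; rewrite S_INR; lra. }
  destruct Hex as [l Hl].
  replace (Hc z) with l; [exact Hl|]. symmetry. exact (clim_to_unique _ _ Hl).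
Qed.

Lemma Hc_succ (z : C) : Hc (z + 1) = Hc z + / (z + 1).
Proof.
  apply clim_to_unique.
  apply (filterlim_ext (fun N => csum (harmonic_term z) N + / (z + 1)
                                 + (- (1)) * / (RtoC (INR N) + (z + 1)))).
  { induction x as [|N IH]; cbn [csum].
    - simpl. ring_simplify (RtoC 0 + (z + 1)). ring.
    - rewrite <- IH. unfold harmonic_term.
      replace (RtoC (INR (S N)) + z) with (RtoC (INR N) + (z + 1)) by (rewrite S_INR, RtoC_plus; ring).
      ring. }
  replace (Hc z + / (z + 1)) with (Hc z + / (z + 1) + - (1) * 0) by ring.
  apply clim_to_plus; [apply clim_to_plus; [apply Hc_cvg | apply filterlim_const]|].
  apply clim_to_mult; [apply filterlim_const | apply clim_to_inv_nat_add].
Qed.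

Lemma sin_cubic_bounds (a : R) : (0 <= a <= 1)%R -> (a - a^3 <= sin a <= a)%R.
Proof.
  intros Ha. pose proof (pre_sin_bound a 0 ltac:(lra) ltac:(lra)) as H.
  unfold sin_approx, sin_term in H. simpl in H. unfold Rdiv in H. simpl in H.
  replace (1 + 1 + 1 + 1 + 1 + 1)%R with 6%R in H by ring.
  match type of H with context [Rinv ?x] =>
    match x with (_ + 1)%R => replace x with 120%R in H by ring end end.
  assert (h3 : (0 <= a*a*a)%R) by (apply Rmult_le_pos; [apply Rmult_le_pos|]; lra).
  assert (h5 : (a*a*a*a*a <= a*a*a)%R) by (assert (a*a <= 1)%R by nra; nra).
  simpl. split; lra.
Qed.

Lemma sin_near_0 (b : R) : (Rabs b <= 1)%R -> (Rabs (sin b - b) <= b^2 /\ Rabs (sin b) <= Rabs b)%R.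
Proof.
  intros Hb. destruct (Rle_dec 0 b) as [H|H].
  - rewrite Rabs_right in Hb by lra.
    pose proof (sin_cubic_bounds b ltac:(lra)).
    assert (b^3 <= b^2)%R by (simpl; nra).
    assert (0 <= sin b)%R by (simpl in *; nra).
    rewrite Rabs_left1, !Rabs_right by lra. lra.
  - rewrite Rabs_left in Hb by lra.
    pose proof (sin_cubic_bounds (- b) ltac:(lra)) as Hs. rewrite sin_neg in Hs.
    assert ((-b)^3 <= b^2)%R by (simpl; nra).
    assert (0 <= - sin b)%R by (simpl in *; nra).
    rewrite Rabs_right, !Rabs_left1 by lra. lra.
Qed.

Lemma cos_near_0 (b : R) : (Rabs b <= 1)%R -> (Rabs (cos b - 1) <= b^2)%R.
Proof.
  intros Hb.
  replace b with (2 * (b/2))%R at 1 by field. rewrite cos_2a_sin.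
  assert (Hb2 : (Rabs (b / 2) = Rabs b / 2)%R) by (rewrite Rabs_div, (Rabs_right 2); lra).
  destruct (sin_near_0 (b/2) ltac:(lra)) as [_ H]. rewrite Hb2 in H.
  assert (Hs : (Rabs (sin (b/2)) ^ 2 <= (Rabs b / 2) ^ 2)%R)
    by (apply pow_incr; split; [apply Rabs_pos | exact H]).
  rewrite pow2_abs in Hs.
  replace ((Rabs b / 2) ^ 2)%R with (b ^ 2 / 4)%R in Hs by (rewrite <- (pow2_abs b); field).
  assert (0 <= sin (b/2) * sin (b/2))%R by apply Rle_0_sqr.
  rewrite Rabs_left1 by lra. simpl in *. lra.
Qed.

Lemma exp_near_0 (t : R) : (Rabs t <= 1/2)%R -> (0 <= exp t - 1 - t <= 2 * t^2)%R.
Proof.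
  intros Ht. apply Rabs_le_between in Ht.
  pose proof (exp_ineq1_le t). pose proof (exp_ineq1_le (- t)).
  assert (Hu : (exp t <= / (1 - t))%R).
  { rewrite <- (Rinv_inv (exp t)), <- exp_Ropp. apply Rinv_le_contravar; lra. }
  assert (/ (1 - t) - 1 - t = t^2 / (1 - t))%R by (field; lra).
  assert (t^2 / (1 - t) <= t^2 * 2)%R.
  { apply Rmult_le_compat_l; [nra|].
    replace 2%R with (/ (1/2))%R by field. apply Rinv_le_contravar; lra. }
  lra.
Qed.

Definition cexp (w : C) : C := ((exp (Re w) * cos (Im w))%R, (exp (Re w) * sin (Im w))%R).

Lemma cexp_add (u v : C) : cexp (u + v) = cexp u * cexp v.
Proof.
  destruct u as [u1 u2], v as [v1 v2]. unfold cexp, Re, Im, Cplus, Cmult. simpl.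
  rewrite exp_plus, cos_plus, sin_plus. f_equal; ring.
Qed.

Lemma cexp_RtoC (l : R) : cexp (RtoC l) = RtoC (exp l).
Proof. unfold cexp, RtoC, Re, Im. simpl. rewrite cos_0, sin_0. f_equal; ring. Qed.

Lemma cpow_pos_cexp (x : R) (z : C) : cpow_pos x z = cexp (z * RtoC (ln x)).
Proof.
  destruct z as [a b]. unfold cpow_pos, cexp, Re, Im, Cmult, RtoC. simpl.
  f_equal; f_equal; try f_equal; ring.
Qed.

Lemma exp_cos_near_0 (a b m : R) :
  (Rabs a <= m)%R -> (Rabs b <= m)%R -> (m <= 1/2)%R ->
  (Rabs (exp a * cos b - 1 - a) <= 4 * m^2)%R.
Proof.
  intros Ha Hb Hm.
  pose proof (exp_near_0 a ltac:(lra)) as Hea.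
  pose proof (cos_near_0 b ltac:(lra)) as Hc.
  assert (Ha2 : (a^2 <= m^2)%R) by (rewrite <- pow2_abs; apply pow_incr; split; [apply Rabs_pos | lra]).
  assert (Hb2 : (b^2 <= m^2)%R) by (rewrite <- pow2_abs; apply pow_incr; split; [apply Rabs_pos | lra]).
  assert (Hexp : (0 < exp a <= 2)%R).
  { pose proof (Rle_abs a). pose proof (Rabs_pos a).
    assert (m^2 <= 1/4)%R by (simpl; nra). split; [apply exp_pos | lra]. }
  replace (exp a * cos b - 1 - a)%R with (exp a * (cos b - 1) + (exp a - 1 - a))%R by ring.
  eapply Rle_trans; [apply Rabs_triang|].
  rewrite Rabs_mult, (Rabs_right (exp a)), (Rabs_right (exp a - 1 - a)) by lra.
  assert (exp a * Rabs (cos b - 1) <= 2 * m^2)%R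
    by (apply Rmult_le_compat; try apply Rabs_pos; lra).
  lra.
Qed.

Lemma exp_sin_near_0 (a b m : R) :
  (Rabs a <= m)%R -> (Rabs b <= m)%R -> (m <= 1/2)%R ->
  (Rabs (exp a * sin b - b) <= 4 * m^2)%R.
Proof.
  intros Ha Hb Hm.
  pose proof (exp_near_0 a ltac:(lra)) as Hea.
  destruct (sin_near_0 b ltac:(lra)) as [Hs _].
  assert (Ha2 : (a^2 <= m^2)%R) by (rewrite <- pow2_abs; apply pow_incr; split; [apply Rabs_pos | lra]).
  assert (Hb2 : (b^2 <= m^2)%R) by (rewrite <- pow2_abs; apply pow_incr; split; [apply Rabs_pos | lra]).
  assert (Hexp : (0 < exp a <= 2)%R).
  { pose proof (Rle_abs a). pose proof (Rabs_pos a).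
    assert (m^2 <= 1/4)%R by (simpl; nra). split; [apply exp_pos | lra]. }
  assert (Hexp1 : (Rabs (exp a - 1) <= 2 * m)%R).
  { apply Rabs_le_between in Ha. apply Rabs_le. simpl in *. nra. }
  replace (exp a * sin b - b)%R with (exp a * (sin b - b) + (exp a - 1) * b)%R by ring.
  eapply Rle_trans; [apply Rabs_triang|].
  rewrite !Rabs_mult, (Rabs_right (exp a)) by lra.
  assert (exp a * Rabs (sin b - b) <= 2 * m^2)%R
    by (apply Rmult_le_compat; try apply Rabs_pos; lra).
  assert (Rabs (exp a - 1) * Rabs b <= 2 * m * m)%R
    by (apply Rmult_le_compat; try apply Rabs_pos; lra).
  simpl in *. lra.
Qed.

Lemma cexp_near_0 (w : C) : (Cmod w <= 1/2)%R -> (Cmod (cexp w - 1 - w) <= 16 * Cmod w ^ 2)%R.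
Proof.
  intros Hw. pose proof (Rmax_Cmod w) as Hmax.
  assert (Ha : (Rabs (Re w) <= Cmod w)%R) by (eapply Rle_trans; [apply Rmax_l | exact Hmax]).
  assert (Hb : (Rabs (Im w) <= Cmod w)%R) by (eapply Rle_trans; [apply Rmax_r | exact Hmax]).
  pose proof (exp_cos_near_0 _ _ _ Ha Hb Hw) as Hre.
  pose proof (exp_sin_near_0 _ _ _ Ha Hb Hw) as Him.
  eapply Rle_trans; [apply Cmod_2Rmax|].
  assert (Hsqrt2 : (sqrt 2 <= 2)%R).
  { rewrite <- (sqrt_square 2) at 2 by lra. apply sqrt_le_1_alt. lra. }
  assert (Hm : (Rmax (Rabs (fst (cexp w - 1 - w)%C)) (Rabs (snd (cexp w - 1 - w)%C))
                <= 8 * Cmod w ^ 2)%R).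
  { destruct w as [a b]. unfold cexp, Re, Im in *. simpl in *.
    replace (exp a * cos b + - (1) + - a)%R with (exp a * cos b - 1 - a)%R by ring.
    replace (exp a * sin b + - 0 + - b)%R with (exp a * sin b - b)%R by ring.
    apply Rmax_lub; pose proof (pow2_ge_0 (Cmod (a, b))); lra. }
  replace (16 * Cmod w ^ 2)%R with (2 * (8 * Cmod w ^ 2))%R by ring.
  apply Rmult_le_compat; [apply sqrt_pos | | exact Hsqrt2 | exact Hm].
  eapply Rle_trans; [apply Rabs_pos | apply Rmax_l].
Qed.

Lemma Cinv_0 : / RtoC 0 = 0.
Proof. unfold Cinv, RtoC. simpl. unfold Rdiv. f_equal; ring. Qed.

(* Valid also when a factor is 0, because [/ 0 = 0]. *)
Lemma Cinv_mult_total (a b : C) : / (a * b) = / a * / b.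
Proof.
  destruct (Ceq_dec a 0) as [->|Ha]; [rewrite Cmult_0_l, Cinv_0; ring|].
  destruct (Ceq_dec b 0) as [->|Hb]; [rewrite Cmult_0_r, Cinv_0; ring|].
  field. split; assumption.
Qed.

Lemma Cinv_inv_total (a : C) : / / a = a.
Proof.
  destruct (Ceq_dec a 0) as [->|Ha]; [rewrite !Cinv_0; reflexivity|].
  field. exact Ha.
Qed.

Lemma exp_le_compat (a b : R) : (a <= b)%R -> (exp a <= exp b)%R.
Proof.
  intros [H | ->]; [apply Rlt_le, exp_increasing, H | apply Rle_refl].
Qed.

Lemma clim_to_of_ratio_bound (p e : nat -> C) (K : R) (M : nat) : (0 <= K)%R ->
  (forall m, (S M <= m)%nat -> p (S m) = p m * (1 + e m)) ->
  (forall m, (S M <= m)%nat -> (Cmod (e m) <= K * (/ INR m - / INR (S m)))%R) ->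
  exists l, clim_to p l.
Proof.
  intros HK Hrec Hb.
  assert (Hpos : forall n, (0 < INR (n + S M))%R) by (intros; apply lt_0_INR; lia).
  assert (Hprod : forall n, (Cmod (p (n + S M)%nat)
            <= Cmod (p (S M)) * exp (K * (/ INR (S M) - / INR (n + S M))))%R).
  { induction n as [|n IH].
    - rewrite Nat.add_0_l, Rminus_eq_0, Rmult_0_r, exp_0. lra.
    - replace (S n + S M)%nat with (S (n + S M)) by lia.
      rewrite Hrec, Cmod_mult by lia.
      assert (H1 : (Cmod (1 + e (n + S M)%nat)
                     <= exp (K * (/ INR (n + S M) - / INR (S (n + S M)))))%R).
      { eapply Rle_trans; [apply Cmod_triangle|]. rewrite Cmod_1.
        eapply Rle_trans; [|apply exp_ineq1_le]. specialize (Hb (n + S M)%nat ltac:(lia)). lra. }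
      eapply Rle_trans; [apply Rmult_le_compat; [apply Cmod_ge_0 | apply Cmod_ge_0 | exact IH | exact H1]|].
      rewrite Rmult_assoc, <- exp_plus. right. f_equal. f_equal. ring. }
  set (B := (Cmod (p (S M)) * exp (K * / INR (S M)))%R).
  assert (Hbound : forall m, (S M <= m)%nat -> (Cmod (p m) <= B)%R).
  { intros m Hm. replace m with ((m - S M) + S M)%nat by lia.
    eapply Rle_trans; [apply Hprod|]. apply Rmult_le_compat_l; [apply Cmod_ge_0|].
    apply exp_le_compat. pose proof (Rinv_0_lt_compat _ (Hpos (m - S M)%nat)). nra. }
  apply (clim_to_of_increment_bound p (B * K) M).
  intros m Hm. rewrite Hrec by lia.
  replace (p m * (1 + e m) - p m) with (p m * e m) by ring.
  rewrite Cmod_mult, Rmult_assoc.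
  apply Rmult_le_compat; [apply Cmod_ge_0 | apply Cmod_ge_0 | apply Hbound | apply Hb]; lia.
Qed.

Lemma ln_succ_sub_ln_bounds (x : R) : (1 <= x)%R -> (/ (x + 1) <= ln (x + 1) - ln x <= / x)%R.
Proof.
  intros Hx. set (L := (ln (x + 1) - ln x)%R).
  assert (HE : exp L = ((x + 1) / x)%R).
  { unfold L, Rminus. rewrite exp_plus, exp_Ropp, !exp_ln by lra. reflexivity. }
  pose proof (exp_ineq1_le L) as H1. pose proof (exp_ineq1_le (- L)) as H2.
  rewrite exp_Ropp, HE in H2. rewrite HE in H1.
  replace (/ ((x + 1) / x))%R with (x / (x + 1))%R in H2 by (field; lra).
  split.
  - replace (/ (x + 1))%R with (1 - x / (x + 1))%R by (field; lra). lra.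
  - replace (/ x)%R with ((x + 1) / x - 1)%R by (field; lra). lra.
Qed.

Lemma gamma_seq_ratio_bound_arith (A x : R) : (0 <= A)%R -> (1 <= x)%R ->
  (((x + 1) * (16 * (A / x) ^ 2) + A / x) * (2 / (x + 1))
     <= (64 * A ^ 2 + 2 * A) * (/ x - / (x + 1)))%R.
Proof.
  intros HA Hx.
  replace (((x + 1) * (16 * (A / x) ^ 2) + A / x) * (2 / (x + 1)))%R
    with ((32 * A ^ 2 * (x + 1) + 2 * A * x) * / (x * x * (x + 1)))%R by (field; lra).
  replace ((64 * A ^ 2 + 2 * A) * (/ x - / (x + 1)))%R
    with ((64 * A ^ 2 + 2 * A) * x * / (x * x * (x + 1)))%R by (field; lra).
  apply Rmult_le_compat_r; [left; apply Rinv_0_lt_compat, Rmult_lt_0_compat; nra|].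
  nra.
Qed.

(* The ratio of consecutive terms of the Euler--Gauss sequence is 1 + O(1/m^2);
   it is applied with x = m and L = ln (m + 1) - ln m. *)
Lemma gamma_seq_ratio_bound (z : C) (x L : R) :
  (1 <= x)%R -> (/ (x + 1) <= L <= / x)%R -> (2 * Cmod z + 1 <= x)%R ->
  (Cmod (RtoC (x + 1) * cexp (z * RtoC L) / (z + RtoC (x + 1)) - 1)
     <= (64 * Cmod z ^ 2 + 2 * Cmod z) * (/ x - / (x + 1)))%R.
Proof.
  intros Hx [HL1 HL2] Hz.
  set (A := Cmod z) in *. assert (HA : (0 <= A)%R) by apply Cmod_ge_0.
  assert (HL0 : (0 < L)%R) by (eapply Rlt_le_trans; [apply Rinv_0_lt_compat | exact HL1]; lra).
  set (w := z * RtoC L).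
  assert (HLx1 : (1 <= (x + 1) * L)%R).
  { apply (Rmult_le_compat_l (x + 1)) in HL1; [|lra]. rewrite Rinv_r in HL1 by lra. exact HL1. }
  assert (HLx2 : ((x + 1) * L - 1 <= / x)%R).
  { apply (Rmult_le_compat_l (x + 1)) in HL2; [|lra].
    replace ((x + 1) * / x)%R with (1 + / x)%R in HL2 by (field; lra). lra. }
  assert (HAL : (A * L <= A / x)%R) by (apply Rmult_le_compat_l; lra).
  assert (Hw : Cmod w = (A * L)%R).
  { unfold w. rewrite Cmod_mult, Cmod_R, Rabs_right by lra. reflexivity. }
  assert (HAx : (A / x <= 1/2)%R).
  { apply (Rmult_le_reg_r x); [lra|]. replace (A / x * x)%R with A by (field; lra). lra. }
  set (d := z + RtoC (x + 1)).
  assert (Hd : ((x + 1) / 2 <= Cmod d)%R).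
  { unfold d. rewrite Cplus_comm. pose proof (Cmod_RtoC_add_ge (x + 1) z ltac:(lra)) as H. fold A in H. lra. }
  assert (Hdnz : d <> 0) by (intro E; rewrite E, Cmod_0 in Hd; lra).
  set (N := RtoC (x + 1) * (cexp w - 1 - w) + z * RtoC ((x + 1) * L - 1)).
  replace (RtoC (x + 1) * cexp w / d - 1) with (N / d)
    by (unfold N, w, d; rewrite RtoC_minus, RtoC_mult; field; exact Hdnz).
  assert (HN : (Cmod N <= (x + 1) * (16 * (A / x) ^ 2) + A / x)%R).
  { unfold N. eapply Rle_trans; [apply Cmod_triangle|].
    rewrite !Cmod_mult, !Cmod_R, (Rabs_right (x + 1)), (Rabs_right ((x + 1) * L - 1)) by lra.
    apply Rplus_le_compat; [apply Rmult_le_compat_l; [lra|] | apply Rmult_le_compat_l; lra].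
    eapply Rle_trans; [apply cexp_near_0; lra|].
    apply Rmult_le_compat_l; [lra|]. rewrite Hw.
    apply pow_incr. split; [apply Rmult_le_pos|]; lra. }
  assert (Hid : (/ Cmod d <= 2 / (x + 1))%R).
  { replace (2 / (x + 1))%R with (/ ((x + 1) / 2))%R by (field; lra).
    apply Rinv_le_contravar; lra. }
  unfold Cdiv. rewrite Cmod_mult, Cmod_inv by exact Hdnz.
  eapply Rle_trans; [|apply gamma_seq_ratio_bound_arith; assumption].
  apply Rmult_le_compat; [apply Cmod_ge_0 | left; apply Rinv_0_lt_compat; lra | exact HN | exact Hid].
Qed.

Definition gamma_seq (z : C) (m : nat) : C :=
  RtoC (INR (fact m)) * cpow_pos (INR m) z / rising z m.

Lemma gamma_seq_succ (z : C) (m : nat) :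
  gamma_seq z (S m) = gamma_seq z m *
    (RtoC (INR (S m)) * cexp (z * RtoC (ln (INR (S m)) - ln (INR m))) / (z + RtoC (INR (S m)))).
Proof.
  unfold gamma_seq. rewrite !cpow_pos_cexp.
  replace (z * RtoC (ln (INR (S m))))
    with (z * RtoC (ln (INR m)) + z * RtoC (ln (INR (S m)) - ln (INR m))) by (rewrite RtoC_minus; ring).
  rewrite cexp_add.
  change (rising z (S m)) with (rising z m * (z + RtoC (INR (S m)))).
  change (fact (S m)) with (S m * fact m)%nat.
  rewrite mult_INR, RtoC_mult. unfold Cdiv. rewrite Cinv_mult_total. ring.
Qed.

Lemma Gamma_cvg (z : C) : clim_to (gamma_seq z) (Gamma z).
Proof.
  assert (Hex : exists l, clim_to (gamma_seq z) l).
  { destruct (INR_unbounded (2 * Cmod z + 1)) as [M HM].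
    apply (clim_to_of_ratio_bound (gamma_seq z)
      (fun m => RtoC (INR (S m)) * cexp (z * RtoC (ln (INR (S m)) - ln (INR m)))
                / (z + RtoC (INR (S m))) - 1)
      (64 * Cmod z ^ 2 + 2 * Cmod z) M).
    - pose proof (Cmod_ge_0 z). pose proof (pow2_ge_0 (Cmod z)). lra.
    - intros m _. rewrite gamma_seq_succ. f_equal. ring.
    - intros m Hm. rewrite S_INR.
      assert (HMm : (INR M <= INR m)%R) by (apply le_INR; lia).
      assert (Hm1 : (1 <= INR m)%R) by (apply (le_INR 1); lia).
      apply gamma_seq_ratio_bound; [exact Hm1 | apply ln_succ_sub_ln_bounds, Hm1 | lra]. }
  destruct Hex as [l Hl].
  replace (Gamma z) with l; [exact Hl|]. symmetry. exact (clim_to_unique _ _ Hl).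
Qed.

Lemma rising_succ (z : C) (m : nat) : rising z (S m) = z * rising (z + 1) m.
Proof.
  induction m as [|m IH].
  - change (z * (z + RtoC (INR 1)) = z * (z + 1)). reflexivity.
  - change (rising z (S m) * (z + RtoC (INR (S (S m))))
            = z * (rising (z + 1) m * (z + 1 + RtoC (INR (S m))))).
    rewrite IH, (S_INR (S m)), RtoC_plus. ring.
Qed.

Lemma Gamma_succ (z : C) : z <> 0 -> Gamma (z + 1) = z * Gamma z.
Proof.
  intros Hz. apply clim_to_unique.
  destruct (INR_unbounded (Cmod z)) as [M HM].
  apply (filterlim_ext_loc (fun m => gamma_seq z m * (z * (1 + (- (z + 1)) * / (RtoC (INR m) + (z + 1)))))).
  { exists (S M). intros m Hm.
    assert (Hm0 : (0 < INR m)%R) by (apply lt_0_INR; lia).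
    assert (Hd : RtoC (INR m) + (z + 1) = z + RtoC (INR (S m))) by (rewrite S_INR, RtoC_plus; ring).
    assert (Hdz : z + RtoC (INR (S m)) <> 0).
    { assert (HMm : (INR M <= INR (S m))%R) by (apply le_INR; lia).
      pose proof (Cmod_RtoC_add_ge (INR (S m)) z (pos_INR _)) as H. rewrite Cplus_comm.
      intro E. rewrite E, Cmod_0 in H. lra. }
    unfold gamma_seq. rewrite !cpow_pos_cexp.
    replace ((z + 1) * RtoC (ln (INR m))) with (z * RtoC (ln (INR m)) + RtoC (ln (INR m))) by ring.
    rewrite cexp_add, cexp_RtoC, exp_ln by exact Hm0.
    assert (Hr : / rising (z + 1) m = z * (/ rising z m * / (z + RtoC (INR (S m))))).
    { rewrite <- Cinv_mult_total. change (rising z m * (z + RtoC (INR (S m)))) with (rising z (S m)).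
      rewrite rising_succ, Cinv_mult_total, Cmult_assoc, Cinv_r by exact Hz. ring. }
    unfold Cdiv. rewrite Hr, Hd.
    replace (1 + - (z + 1) * / (z + RtoC (INR (S m)))) with (RtoC (INR m) * / (z + RtoC (INR (S m))))
      by (rewrite S_INR, RtoC_plus in *; field; exact Hdz).
    ring. }
  rewrite (Cmult_comm z (Gamma z)).
  apply clim_to_mult; [apply Gamma_cvg|].
  assert (H : clim_to (fun m => z * (1 + (- (z + 1)) * / (RtoC (INR m) + (z + 1))))
                      (z * (1 + (- (z + 1)) * 0))).
  { apply clim_to_mult; [apply filterlim_const|].
    apply clim_to_plus; [apply filterlim_const|].
    apply clim_to_mult; [apply filterlim_const | apply clim_to_inv_nat_add]. }
  replace (z * (1 + (- (z + 1)) * 0)) with z in H by ring. exact H.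
Qed.

Lemma csum_ext (f g : nat -> C) (n : nat) :
  (forall k, (k < n)%nat -> f k = g k) -> csum f n = csum g n.
Proof.
  induction n as [|n IH]; intros H; [reflexivity|].
  simpl. rewrite IH by (intros; apply H; lia). rewrite H by lia. reflexivity.
Qed.

Lemma csum_shift (f : nat -> C) (n : nat) : csum f (S n) = f O + csum (fun k => f (S k)) n.
Proof. induction n as [|n IH]; [simpl; ring|]. cbn [csum] in *. rewrite IH. ring. Qed.

Lemma csum_plus (f g : nat -> C) (n : nat) : csum (fun k => f k + g k) n = csum f n + csum g n.
Proof. induction n as [|n IH]; simpl; [ring|]. rewrite IH. ring. Qed.

Lemma csum_scal (f : nat -> C) (a : C) (n : nat) : csum (fun k => a * f k) n = a * csum f n.
Proof. induction n as [|n IH]; simpl; [ring|]. rewrite IH. ring. Qed.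

Lemma csum_comm (g : nat -> nat -> C) (n m : nat) :
  csum (fun j => csum (fun k => g j k) m) n = csum (fun k => csum (fun j => g j k) n) m.
Proof.
  induction n as [|n IH]; simpl.
  - induction m as [|m IHm]; simpl; [reflexivity|]. rewrite <- IHm. ring.
  - rewrite IH, <- csum_plus. reflexivity.
Qed.

Lemma csum_vanishing_tail (f : nat -> C) (m N : nat) : (m <= N)%nat ->
  (forall k, (m <= k < N)%nat -> f k = 0) -> csum f N = csum f m.
Proof.
  intros Hm H. induction N as [|N IH].
  - replace m with O by lia. reflexivity.
  - destruct (Nat.eq_dec m (S N)) as [->|Hne]; [reflexivity|].
    simpl. rewrite IH by (lia || (intros; apply H; lia)). rewrite H by lia. ring.
Qed.

Lemma Hnat_csum (n : nat) : csum (fun j => / RtoC (INR (S j))) n = Hnat n.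
Proof. induction n as [|n IH]; [reflexivity|]. cbn [csum Hnat]. rewrite IH. reflexivity. Qed.

Lemma RtoC_INR_S_neq0 (n : nat) : RtoC (INR (S n)) <> 0.
Proof. intro E. apply RtoC_inj in E. pose proof (lt_0_INR (S n) ltac:(lia)). lra. Qed.

(* Binomial coefficients in C through Pascal's rule; unlike [Binomial.C n k]
   they vanish for k > n. *)
Fixpoint binomC (n k : nat) : C :=
  match n, k with
  | _, O => 1
  | O, S _ => 0
  | S n', S k' => binomC n' k' + binomC n' (S k')
  end.

Lemma binomC_n_0 (n : nat) : binomC n 0 = 1.
Proof. destruct n; reflexivity. Qed.

Lemma binomC_gt (n k : nat) : (n < k)%nat -> binomC n k = 0.
Proof.
  revert k. induction n as [|n IH]; intros k Hk; destruct k; try lia; [reflexivity|].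
  simpl. rewrite !IH by lia. ring.
Qed.

Lemma binomC_n_1 (n : nat) : binomC n 1 = RtoC (INR n).
Proof.
  induction n as [|n IH]; [reflexivity|].
  change (binomC n 0 + binomC n 1 = RtoC (INR (S n))).
  rewrite IH, binomC_n_0, S_INR, RtoC_plus. ring.
Qed.

Lemma binomC_absorb (n k : nat) :
  RtoC (INR (S k)) * binomC (S n) (S k) = RtoC (INR (S n)) * binomC n k.
Proof.
  revert k. induction n as [|n IH]; intros k.
  - destruct k; [simpl; ring|]. cbn [binomC]. ring.
  - destruct k.
    + change (RtoC (INR 1) * (binomC (S n) 0 + binomC (S n) 1)
              = RtoC (INR (S (S n))) * binomC (S n) 0).
      rewrite binomC_n_0, binomC_n_1, (S_INR (S n)), RtoC_plus. simpl INR. ring.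
    + pose proof (IH k) as E1. pose proof (IH (S k)) as E2.
      change (binomC (S (S n)) (S (S k))) with (binomC (S n) (S k) + binomC (S n) (S (S k))).
      change (binomC (S n) (S k)) with (binomC n k + binomC n (S k)) in *.
      rewrite (S_INR (S k)), RtoC_plus in *. rewrite (S_INR (S n)), RtoC_plus.
      transitivity (binomC n k + binomC n (S k) + RtoC (INR (S k)) * (binomC n k + binomC n (S k))
                    + (RtoC (INR (S k)) + 1) * binomC (S n) (S (S k))); [ring|].
      rewrite E1, E2, S_INR, RtoC_plus. ring.
Qed.

Lemma RtoC_Binomial_C (n k : nat) : (k <= n)%nat -> RtoC (Binomial.C n k) = binomC n k.
Proof.
  revert k. induction n as [|n IH]; intros k Hk.
  - replace k with O by lia. rewrite C_n_0. reflexivity.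
  - destruct k as [|k]; [rewrite C_n_0, binomC_n_0; reflexivity|].
    cbn [binomC]. destruct (Nat.eq_dec k n) as [->|Hne].
    + rewrite C_n_n, (binomC_gt n (S n)) by lia. rewrite <- IH, C_n_n by lia. ring.
    + rewrite <- pascal, RtoC_plus, !IH by lia. reflexivity.
Qed.

Lemma csum_binomC_div (n k : nat) :
  csum (fun j => binomC (n - 1 - j) k / RtoC (INR (S j))) n = binomC n k * (Hnat n - Hnat k).
Proof.
  revert k. induction n as [|n IH]; intros k.
  - destruct k; simpl; ring.
  - destruct k as [|k].
    + rewrite binomC_n_0, (csum_ext _ (fun j => / RtoC (INR (S j))))
        by (intros; rewrite binomC_n_0; unfold Cdiv; ring).
      rewrite Hnat_csum. change (Hnat 0) with (RtoC 0). ring.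
    + cbn [csum]. replace (S n - 1 - n)%nat with O by lia.
      rewrite (csum_ext _ (fun j => binomC (n - 1 - j) k / RtoC (INR (S j))
                                  + binomC (n - 1 - j) (S k) / RtoC (INR (S j)))).
      2:{ intros j Hj. replace (S n - 1 - j)%nat with (S (n - 1 - j)) by lia.
          cbn [binomC]. field. apply RtoC_INR_S_neq0. }
      rewrite csum_plus, !IH. cbn [Hnat].
      assert (Habs : binomC (S n) (S k) / RtoC (INR (S n)) = binomC n k / RtoC (INR (S k))).
      { pose proof (RtoC_INR_S_neq0 n). pose proof (RtoC_INR_S_neq0 k).
        assert (E : binomC (S n) (S k) = RtoC (INR (S n)) * binomC n k / RtoC (INR (S k))).
        { rewrite <- binomC_absorb. field. assumption. }
        rewrite E. field. split; assumption. }
      transitivity (binomC (S n) (S k) * (Hnat n - Hnat k) + binomC (S n) (S k) / RtoC (INR (S n))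
                    - binomC (S n) (S k) / RtoC (INR (S k))).
      * rewrite Habs. change (binomC 0 (S k)) with (RtoC 0).
        change (binomC (S n) (S k)) with (binomC n k + binomC n (S k)). unfold Cdiv. ring.
      * unfold Cdiv. ring.
Qed.

Definition sgn (k : nat) : C := RtoC ((-1) ^ k)%R.

Lemma sgn_S (k : nat) : sgn (S k) = - sgn k.
Proof. unfold sgn. simpl pow. rewrite RtoC_mult. simpl. ring. Qed.

Definition binom_transform (n : nat) (f : nat -> C) : C :=
  csum (fun k => sgn k * binomC n k * f k) (S n).

Lemma binom_transform_ext (n : nat) (u v : nat -> C) :
  (forall k, u k = v k) -> binom_transform n u = binom_transform n v.
Proof. intros H. apply csum_ext. intros. rewrite H. reflexivity. Qed.

Lemma binom_transform_plus (n : nat) (u v : nat -> C) :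
  binom_transform n (fun k => u k + v k) = binom_transform n u + binom_transform n v.
Proof. unfold binom_transform. rewrite <- csum_plus. apply csum_ext. intros. ring. Qed.

Lemma binom_transform_scal (n : nat) (u : nat -> C) (a : C) :
  binom_transform n (fun k => a * u k) = a * binom_transform n u.
Proof. unfold binom_transform. rewrite <- csum_scal. apply csum_ext. intros. ring. Qed.

Lemma binom_transform_succ (n : nat) (u : nat -> C) :
  binom_transform (S n) u = binom_transform n u - binom_transform n (fun k => u (S k)).
Proof.
  unfold binom_transform.
  rewrite (csum_shift (fun k => sgn k * binomC (S n) k * u k) (S n)),
          (csum_shift (fun k => sgn k * binomC n k * u k) n).
  rewrite (csum_ext (fun k => sgn (S k) * binomC (S n) (S k) * u (S k))
             (fun k => (-1) * (sgn k * binomC n k * u (S k))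
                       + (-1) * (sgn k * binomC n (S k) * u (S k))))
    by (intros; rewrite sgn_S; cbn [binomC]; ring).
  rewrite (csum_ext (fun k => sgn (S k) * binomC n (S k) * u (S k))
             (fun k => (-1) * (sgn k * binomC n (S k) * u (S k))))
    by (intros; rewrite sgn_S; ring).
  rewrite csum_plus, !csum_scal. cbn [csum].
  rewrite (binomC_gt n (S n)), !binomC_n_0 by lia. ring.
Qed.

Lemma csum_minus (f g : nat -> C) (n : nat) : csum (fun k => f k - g k) n = csum f n - csum g n.
Proof. induction n as [|n IH]; simpl; [ring|]. rewrite IH. ring. Qed.

(* Multiplying by H_k in a binomial transform: follows from
   [csum_binomC_div] after exchanging the order of summation. *)
Lemma binom_transform_Hnat (n : nat) (f : nat -> C) :
  csum (fun k => sgn k * binomC n k * f k * Hnat k) (S n)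
  = Hnat n * binom_transform n f
    - csum (fun j => binom_transform (n - 1 - j) f / RtoC (INR (S j))) n.
Proof.
  rewrite (csum_ext (fun j => binom_transform (n - 1 - j) f / RtoC (INR (S j)))
     (fun j => csum (fun k => sgn k * f k * (binomC (n - 1 - j) k / RtoC (INR (S j)))) (S n))).
  2:{ intros j Hj. unfold binom_transform.
      rewrite (csum_vanishing_tail _ (S (n - 1 - j)) (S n)) by
        (lia || (intros k Hk; rewrite binomC_gt by lia; unfold Cdiv; ring)).
      unfold Cdiv. rewrite Cmult_comm, <- csum_scal. apply csum_ext. intros; ring. }
  rewrite csum_comm.
  rewrite (csum_ext (fun k => csum (fun j => sgn k * f k * (binomC (n - 1 - j) k / RtoC (INR (S j)))) n)
     (fun k => sgn k * f k * (binomC n k * (Hnat n - Hnat k))))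
    by (intros; rewrite csum_scal, csum_binomC_div; reflexivity).
  unfold binom_transform. rewrite <- csum_scal, <- csum_minus.
  apply csum_ext. intros; ring.
Qed.

Lemma csum_Hnat_by_parts (V : nat -> C) (n : nat) :
  csum (fun j => V (n - 1 - j)%nat / RtoC (INR (S j))) n
  = Hnat n * V O - csum (fun k => Hnat (n - 1 - k) * (V k - V (S k))) n.
Proof.
  revert V. induction n as [|n IH]; intros V; [simpl; ring|].
  rewrite (csum_shift (fun k => Hnat (S n - 1 - k) * (V k - V (S k))) n).
  cbn [csum]. replace (S n - 1 - n)%nat with O by lia. replace (S n - 1 - 0)%nat with n by lia.
  rewrite (csum_ext (fun j => V (S n - 1 - j)%nat / RtoC (INR (S j)))
                    (fun j => V (S (n - 1 - j)) / RtoC (INR (S j))))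
    by (intros j Hj; do 2 f_equal; lia).
  rewrite (IH (fun k => V (S k))).
  rewrite (csum_ext (fun k => Hnat (S n - 1 - S k) * (V (S k) - V (S (S k))))
                    (fun k => Hnat (n - 1 - k) * (V (S k) - V (S (S k)))))
    by (intros k Hk; do 2 f_equal; lia).
  cbn [Hnat]. unfold Cdiv. ring.
Qed.

Fixpoint poch (z : C) (k : nat) : C :=
  match k with O => 1 | S k' => poch z k' * (z + RtoC (INR k')) end.

Lemma poch_S (z : C) (k : nat) : poch z (S k) = poch z k * (z + RtoC (INR k)).
Proof. reflexivity. Qed.

Lemma poch_succ (z : C) (k : nat) : poch z (S k) = z * poch (z + 1) k.
Proof.
  induction k as [|k IH]; [simpl; ring|].
  rewrite poch_S, IH, poch_S, S_INR, RtoC_plus. ring.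
Qed.

Lemma poch_neq0 (z : C) (k : nat) : (forall j, z + RtoC (INR j) <> 0) -> poch z k <> 0.
Proof.
  intros H. induction k as [|k IH].
  - intro E. apply RtoC_inj in E. lra.
  - rewrite poch_S. apply Cmult_neq_0; auto.
Qed.

Lemma poch_ratio_succ (x y : C) (k : nat) :
  poch x (S k) / poch y (S k) = x / y * (poch (x + 1) k / poch (y + 1) k).
Proof. rewrite !poch_succ. unfold Cdiv. rewrite !Cinv_mult_total. ring. Qed.

Definition hsum (z : C) (k : nat) : C := csum (fun j => / (z + RtoC (INR j))) k.

Lemma hsum_S (z : C) (k : nat) : hsum z (S k) = hsum z k + / (z + RtoC (INR k)).
Proof. reflexivity. Qed.

Lemma hsum_succ (z : C) (k : nat) : hsum z (S k) = / z + hsum (z + 1) k.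
Proof.
  unfold hsum. rewrite csum_shift. f_equal; [simpl; f_equal; ring|].
  apply csum_ext. intros j _. rewrite S_INR, RtoC_plus. f_equal. ring.
Qed.

Lemma add_nat_neq0_succ (y : C) : (forall j, y + RtoC (INR j) <> 0) ->
  forall j, y + 1 + RtoC (INR j) <> 0.
Proof.
  intros Hy j. replace (y + 1 + RtoC (INR j)) with (y + RtoC (INR (S j)))
    by (rewrite S_INR, RtoC_plus; ring). apply Hy.
Qed.

Lemma add_nat_neq0_0 (y : C) : (forall j, y + RtoC (INR j) <> 0) -> y <> 0.
Proof. intros Hy. specialize (Hy O). simpl INR in Hy. rewrite Cplus_0_r in Hy. exact Hy. Qed.

Lemma binom_transform_poch_ratio (n : nat) : forall x y : C,
  (forall j, y + RtoC (INR j) <> 0) ->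
  binom_transform n (fun k => poch x k / poch y k) = poch (y - x) n / poch y n.
Proof.
  induction n as [|n IH]; intros x y Hy.
  - unfold binom_transform. cbn [csum poch binomC]. unfold sgn. simpl pow. unfold Cdiv. ring.
  - pose proof (add_nat_neq0_succ y Hy) as Hy1. pose proof (add_nat_neq0_0 y Hy) as Hy0.
    pose proof (poch_neq0 y n Hy) as HY. pose proof (Hy n) as Hyn.
    rewrite binom_transform_succ, (binom_transform_ext n _ _ (poch_ratio_succ x y)).
    rewrite binom_transform_scal, (IH x y Hy), (IH (x + 1) (y + 1) Hy1).
    replace (y + 1 - (x + 1)) with (y - x) by ring.
    assert (HA : poch (y + 1) n = poch y n * (y + RtoC (INR n)) / y)
      by (rewrite <- poch_S, poch_succ; field; exact Hy0).
    rewrite HA, !poch_S. field. repeat split; assumption.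
Qed.

Lemma binom_transform_poch_ratio_hsum (n : nat) : forall x y : C,
  (forall j, y + RtoC (INR j) <> 0) -> (forall j, x + RtoC (INR j) <> 0) ->
  (forall j, y - x + RtoC (INR j) <> 0) ->
  binom_transform n (fun k => poch x k / poch y k * hsum x k)
  = - (poch (y - x) n / poch y n) * hsum (y - x) n.
Proof.
  induction n as [|n IH]; intros x y Hy Hx Hs.
  - unfold binom_transform, hsum. cbn [csum poch binomC]. unfold sgn. simpl pow. unfold Cdiv. ring.
  - pose proof (add_nat_neq0_succ y Hy) as Hy1. pose proof (add_nat_neq0_0 y Hy) as Hy0.
    pose proof (add_nat_neq0_succ x Hx) as Hx1. pose proof (add_nat_neq0_0 x Hx) as Hx0.
    assert (Hs1 : forall j, y + 1 - (x + 1) + RtoC (INR j) <> 0)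
      by (intros j; replace (y + 1 - (x + 1)) with (y - x) by ring; apply Hs).
    pose proof (poch_neq0 y n Hy) as HY. pose proof (Hy n) as Hyn. pose proof (Hs n) as Hsn.
    rewrite binom_transform_succ.
    rewrite (binom_transform_ext n (fun k => poch x (S k) / poch y (S k) * hsum x (S k))
      (fun k => / y * (poch (x + 1) k / poch (y + 1) k)
                + x / y * (poch (x + 1) k / poch (y + 1) k * hsum (x + 1) k))).
    2:{ intros k. rewrite poch_ratio_succ, hsum_succ. field. repeat split; auto. apply poch_neq0; auto. }
    rewrite binom_transform_plus, binom_transform_scal, binom_transform_scal.
    rewrite (IH x y Hy Hx Hs), (IH (x + 1) (y + 1) Hy1 Hx1 Hs1),
            (binom_transform_poch_ratio n (x + 1) (y + 1) Hy1).
    replace (y + 1 - (x + 1)) with (y - x) by ring.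
    assert (HA : poch (y + 1) n = poch y n * (y + RtoC (INR n)) / y)
      by (rewrite <- poch_S, poch_succ; field; exact Hy0).
    rewrite HA, hsum_S, !poch_S. field. repeat split; assumption.
Qed.

Section PochhammerHarmonicSum.

Variables (x s y D : C).
Hypothesis Hxy : y = x + s.
Hypothesis Hy : forall j, y + RtoC (INR j) <> 0.
Hypothesis Hx : forall j, x + RtoC (INR j) <> 0.
Hypothesis Hs : forall j, s + RtoC (INR j) <> 0.

Lemma binom_transform_poch_ratio_harmonic (m : nat) :
  binom_transform m (fun k => (D - hsum x k) * (poch x k / poch y k))
  = poch s m / poch y m * (D + hsum s m).
Proof.
  rewrite (binom_transform_ext m _ (fun k => D * (poch x k / poch y k)
                                         + (-1) * (poch x k / poch y k * hsum x k)))
    by (intros; ring).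
  assert (Hyx : y - x = s) by (rewrite Hxy; ring).
  rewrite binom_transform_plus, !binom_transform_scal, binom_transform_poch_ratio,
          binom_transform_poch_ratio_hsum, Hyx; try rewrite Hyx; auto.
  ring.
Qed.

Lemma poch_ratio_harmonic_diff (k : nat) :
  poch s k / poch y k * (D + hsum s k) - poch s (S k) / poch y (S k) * (D + hsum s (S k))
  = ((D + hsum s k) * x - 1) * (poch s k / poch y k) / (y + RtoC (INR k)).
Proof.
  pose proof (poch_neq0 y k Hy). pose proof (Hy k). pose proof (Hs k).
  rewrite hsum_S, !poch_S. subst y. field. repeat split; assumption.
Qed.

Lemma binom_transform_Hnat_poch_ratio (n : nat) :
  csum (fun k => sgn k * binomC n k * ((D - hsum x k) * (poch x k / poch y k)) * Hnat k) (S n)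
  = Hnat n * (poch s n / poch y n * (D + hsum s n)) - Hnat n * D
    + csum (fun k => Hnat (n - 1 - k)
             * (((D + hsum s k) * x - 1) * (poch s k / poch y k) / (y + RtoC (INR k)))) n.
Proof.
  rewrite binom_transform_Hnat, binom_transform_poch_ratio_harmonic.
  rewrite (csum_ext _ (fun j => poch s (n - 1 - j) / poch y (n - 1 - j) * (D + hsum s (n - 1 - j))
                                / RtoC (INR (S j))))
    by (intros; rewrite binom_transform_poch_ratio_harmonic; reflexivity).
  rewrite (csum_Hnat_by_parts (fun m => poch s m / poch y m * (D + hsum s m))).
  rewrite (csum_ext _ _ n (fun k _ => f_equal (Cmult (Hnat (n - 1 - k))) (poch_ratio_harmonic_diff k))).
  unfold hsum. cbn [poch csum]. field. apply poch_neq0, Hy.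
Qed.

End PochhammerHarmonicSum.

Lemma not_int_add_nat_neq0 (z : C) : not_int z -> forall j : nat, z + RtoC (INR j) <> 0.
Proof.
  intros H j E. apply (H (- Z.of_nat j)%Z).
  rewrite opp_IZR, <- INR_IZR_INZ, RtoC_opp.
  replace z with (z + RtoC (INR j) - RtoC (INR j)) by ring. rewrite E. ring.
Qed.

Lemma not_int_add_1 (z : C) : not_int z -> not_int (z + 1).
Proof.
  intros H m E. apply (H (m - 1)%Z). rewrite minus_IZR, RtoC_minus, <- E. simpl. ring.
Qed.

Lemma not_int_neq0 (z : C) : not_int z -> z <> 0.
Proof. intros H E. apply (H 0%Z). rewrite E. reflexivity. Qed.

Lemma Gamma_add_nat (z : C) (k : nat) : (forall j, z + RtoC (INR j) <> 0) ->
  Gamma (z + RtoC (INR k)) = poch z k * Gamma z.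
Proof.
  intros H. induction k as [|k IH]; [simpl; rewrite Cplus_0_r; ring|].
  replace (z + RtoC (INR (S k))) with (z + RtoC (INR k) + 1) by (rewrite S_INR, RtoC_plus; ring).
  rewrite Gamma_succ, IH, poch_S by apply H. ring.
Qed.

Lemma Hc_add_nat (z : C) (k : nat) : Hc (z + RtoC (INR k)) = Hc z + hsum (z + 1) k.
Proof.
  induction k as [|k IH]; [unfold hsum; simpl; rewrite Cplus_0_r; ring|].
  replace (z + RtoC (INR (S k))) with (z + RtoC (INR k) + 1) by (rewrite S_INR, RtoC_plus; ring).
  rewrite Hc_succ, IH, hsum_S. replace (z + 1 + RtoC (INR k)) with (z + RtoC (INR k) + 1) by ring.
  ring.
Qed.

Section GammaRatios.

Variables r s : C.
Hypotheses (hr : not_int r) (hs : not_int s) (hs0 : s <> 0) (hrs : not_int (r - s)).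

Local Notation x := (r - s + 1).
Local Notation y := (r + 1).
Local Notation K := (s * Gamma s * Gamma (r - s + 1) / Gamma (r + 1)).
Local Notation D := (Hc s - Hc (r - s)).

Let Hy := not_int_add_nat_neq0 _ (not_int_add_1 _ hr).
Let Hx := not_int_add_nat_neq0 _ (not_int_add_1 _ hrs).
Let Hs := not_int_add_nat_neq0 _ hs.

Lemma x_neq0 : x <> 0.
Proof. apply not_int_neq0, not_int_add_1, hrs. Qed.

Lemma Gamma_y_add_nat (k : nat) : Gamma (RtoC (INR k) + r + 1) = poch y k * Gamma y.
Proof. rewrite <- Gamma_add_nat by exact Hy. f_equal. ring. Qed.

Lemma Gamma_x_succ : Gamma (x + 1) = x * Gamma x.
Proof. apply Gamma_succ, x_neq0. Qed.

Lemma Gamma_s_succ : Gamma (s + 1) = s * Gamma s.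
Proof. apply Gamma_succ, hs0. Qed.

Lemma lhs_summand_eq (k : nat) :
  (Hc s - Hc (RtoC (INR k) + r - s)) / cbinom (RtoC (INR k) + r) s
  = K * ((D - hsum x k) * (poch x k / poch y k)).
Proof.
  replace (RtoC (INR k) + r - s) with (r - s + RtoC (INR k)) by ring.
  rewrite Hc_add_nat. unfold cbinom.
  rewrite Gamma_y_add_nat, Gamma_s_succ.
  replace (RtoC (INR k) + r - s + 1) with (x + RtoC (INR k)) by ring.
  rewrite (Gamma_add_nat x k Hx).
  unfold Cdiv. rewrite !Cinv_mult_total, !Cinv_inv_total. ring.
Qed.

Lemma rhs_harmonic_term_eq (n : nat) :
  (r + 1) / ((r - s + 1) * (r - s + 1)) * / cbinom (RtoC (INR n) + r) (r - s + 1)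
  + s / (r - s + 1) * ((Hc (RtoC (INR n) + s - 1) - Hc (r - s + 1))
                       / cbinom (RtoC (INR n) + r) (r - s + 1))
  = K * (poch s n / poch y n * (D + hsum s n)).
Proof.
  pose proof (poch_neq0 y n Hy) as HP. pose proof x_neq0 as Hx0.
  unfold cbinom. rewrite Gamma_y_add_nat, Gamma_x_succ.
  replace (RtoC (INR n) + r - (r - s + 1) + 1) with (s + RtoC (INR n)) by ring.
  replace (RtoC (INR n) + s - 1) with (s - 1 + RtoC (INR n)) by ring.
  rewrite (Gamma_add_nat s n Hs), Hc_add_nat, Hc_succ.
  replace (s - 1 + 1) with s by ring.
  assert (Hcs : Hc (s - 1) = Hc s - / s).
  { pose proof (Hc_succ (s - 1)) as H. replace (s - 1 + 1) with s in H by ring. rewrite H. ring. }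
  rewrite Hcs. unfold Cdiv. rewrite !Cinv_mult_total, !Cinv_inv_total.
  (* Hide the inverse so that [field] does not ask for Gamma (r + 1) <> 0. *)
  generalize (/ Gamma (r + 1)). intros iG. field. repeat split; assumption.
Qed.

Lemma rhs_binom_term_eq : (Hc (r - s) - Hc s) / cbinom r s = K * (- D).
Proof.
  unfold cbinom. rewrite Gamma_s_succ.
  unfold Cdiv. rewrite !Cinv_mult_total, !Cinv_inv_total. ring.
Qed.

Lemma rhs_summand_eq (k : nat) :
  (s * (RtoC (INR k) + s) * (Hc (RtoC (INR k) + s) - Hc (r - s + 1)) + RtoC (INR k))
  / ((RtoC (INR k) + s) * (RtoC (INR k) + s) * cbinom (r + RtoC (INR k) + 1) (r - s + 1))
  = K * (((D + hsum s k) * x - 1) * (poch s k / poch y k) / (y + RtoC (INR k))).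
Proof.
  pose proof (poch_neq0 y k Hy) as HP. pose proof x_neq0 as Hx0.
  pose proof (Hs k) as Hsk. pose proof (Hy k) as Hyk.
  unfold cbinom. rewrite Gamma_x_succ.
  replace (r + RtoC (INR k) + 1 + 1) with (y + RtoC (INR (S k))) by (rewrite S_INR, RtoC_plus; ring).
  replace (r + RtoC (INR k) + 1 - (r - s + 1) + 1) with (s + 1 + RtoC (INR k)) by ring.
  rewrite (Gamma_add_nat y (S k) Hy), (Gamma_add_nat (s + 1) k (add_nat_neq0_succ s Hs)), Gamma_s_succ.
  replace (RtoC (INR k) + s) with (s + RtoC (INR k)) by ring.
  rewrite Hc_add_nat, Hc_succ.
  assert (Hp1 : poch (s + 1) k = poch s k * (s + RtoC (INR k)) / s)
    by (rewrite <- poch_S, poch_succ; field; exact hs0).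
  assert (Hh1 : hsum (s + 1) k = hsum s k + / (s + RtoC (INR k)) - / s)
    by (pose proof (hsum_succ s k) as Hsucc; rewrite hsum_S in Hsucc; rewrite Hsucc; ring).
  rewrite Hp1, Hh1, poch_S.
  unfold Cdiv. rewrite !Cinv_mult_total, !Cinv_inv_total.
  generalize (/ Gamma (r + 1)). intros iG. field. repeat split; assumption.
Qed.

Lemma lhs_sum_eq (n : nat) :
  csum (fun k =>
      RtoC ((-1) ^ k * Binomial.C n k)%R
      * ((Hc s - Hc (RtoC (INR k) + r - s)) / cbinom (RtoC (INR k) + r) s)
      * Hnat k) (S n)
  = K * csum (fun k => sgn k * binomC n k * ((D - hsum x k) * (poch x k / poch y k)) * Hnat k) (S n).
Proof.
  rewrite <- csum_scal. apply csum_ext. intros k Hk.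
  rewrite RtoC_mult, RtoC_Binomial_C, lhs_summand_eq by lia. unfold sgn. ring.
Qed.

Lemma rhs_sum_eq (n : nat) :
  csum (fun k =>
      Hnat (n - 1 - k)
      * ((s * (RtoC (INR k) + s) * (Hc (RtoC (INR k) + s) - Hc (r - s + 1)) + RtoC (INR k))
         / ((RtoC (INR k) + s) * (RtoC (INR k) + s)
            * cbinom (r + RtoC (INR k) + 1) (r - s + 1)))) n
  = K * csum (fun k => Hnat (n - 1 - k)
                 * (((D + hsum s k) * x - 1) * (poch s k / poch y k) / (y + RtoC (INR k)))) n.
Proof.
  rewrite <- csum_scal. apply csum_ext. intros k _. rewrite rhs_summand_eq. ring.
Qed.

End GammaRatios.

Theorem theorem15 (n : nat) (r s : C)
  (hr : not_int r) (hs : not_int s) (hs0 : s <> 0) (hrs : not_int (r - s)) :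
  csum (fun k =>
      RtoC ((-1) ^ k * Binomial.C n k)%R
      * ((Hc s - Hc (RtoC (INR k) + r - s)) / cbinom (RtoC (INR k) + r) s)
      * Hnat k) (S n)
  =
  Hnat n *
    ((r + 1) / ((r - s + 1) * (r - s + 1)) * / cbinom (RtoC (INR n) + r) (r - s + 1)
     + s / (r - s + 1) * ((Hc (RtoC (INR n) + s - 1) - Hc (r - s + 1))
                           / cbinom (RtoC (INR n) + r) (r - s + 1)))
  + Hnat n * ((Hc (r - s) - Hc s) / cbinom r s)
  + csum (fun k =>
      Hnat (n - 1 - k)
      * ((s * (RtoC (INR k) + s) * (Hc (RtoC (INR k) + s) - Hc (r - s + 1)) + RtoC (INR k))
         / ((RtoC (INR k) + s) * (RtoC (INR k) + s)
            * cbinom (r + RtoC (INR k) + 1) (r - s + 1)))) n.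
Proof.
  pose proof (not_int_add_nat_neq0 _ (not_int_add_1 _ hr)) as Hy.
  pose proof (not_int_add_nat_neq0 _ (not_int_add_1 _ hrs)) as Hx.
  pose proof (not_int_add_nat_neq0 _ hs) as Hs.
  rewrite lhs_sum_eq, rhs_sum_eq, rhs_harmonic_term_eq, rhs_binom_term_eq by assumption.
  rewrite (binom_transform_Hnat_poch_ratio (r - s + 1) s) by (ring || assumption).
  ring.
Qed.
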